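(* For every modal proposition $A$, if $\mathsf{LC}\vdash A$ then $\mathsf{iGL}\vdash A^\Box$.
   Context: Modal language: propositional variables, $\bot$, $\wedge,\vee,\to$, $\Box$; atomic = variables and $\bot$. $\mathsf{iGL}$: intuitionistic propositional logic in the modal language plus $\Box(A\to B)\to(\Box A\to\Box B)$, $\Box A\to\Box\Box A$, $\Box(\Box A\to A)\to\Box A$, closed under modus ponens and necessitation. $\mathsf{LC}:=\mathsf{iGL}+\{A\to\Box A\}$. Box-translation: $A^\Box:=A\wedge\Box A$ for atomic $A$; $(A\circ B)^\Box:=A^\Box\circ B^\Box$ for $\circ\in\{\wedge,\vee\}$; $(A\to B)^\Box:=(A^\Box\to B^\Box)\wedge\Box(A^\Box\to B^\Box)$; $(\Box A)^\Box:=\Box(A^\Box)$. *)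

Inductive form : Type :=
| Var : nat -> form
| Bot : form
| And : form -> form -> form
| Or  : form -> form -> form
| Imp : form -> form -> form
| Box : form -> form.

(** Hilbert-style calculus for iGL, optionally extended by the
    axiom schema A -> Box A (giving LC). *)
Inductive prv (lc : bool) : form -> Prop :=
| ax_K  : forall A B, prv lc (Imp A (Imp B A))
| ax_S  : forall A B C,
    prv lc (Imp (Imp A (Imp B C)) (Imp (Imp A B) (Imp A C)))
| ax_AndE1 : forall A B, prv lc (Imp (And A B) A)
| ax_AndE2 : forall A B, prv lc (Imp (And A B) B)
| ax_AndI  : forall A B, prv lc (Imp A (Imp B (And A B)))
| ax_OrI1  : forall A B, prv lc (Imp A (Or A B))
| ax_OrI2  : forall A B, prv lc (Imp B (Or A B))
| ax_OrE   : forall A B C,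
    prv lc (Imp (Imp A C) (Imp (Imp B C) (Imp (Or A B) C)))
| ax_EFQ   : forall A, prv lc (Imp Bot A)
| ax_Kbox  : forall A B, prv lc (Imp (Box (Imp A B)) (Imp (Box A) (Box B)))
| ax_4     : forall A, prv lc (Imp (Box A) (Box (Box A)))
| ax_Lob   : forall A, prv lc (Imp (Box (Imp (Box A) A)) (Box A))
| ax_CP    : forall A, lc = true -> prv lc (Imp A (Box A))
| r_MP  : forall A B, prv lc (Imp A B) -> prv lc A -> prv lc B
| r_Nec : forall A, prv lc A -> prv lc (Box A).

Definition iGL_prv (A : form) : Prop := prv false A.
Definition LC_prv (A : form) : Prop := prv true A.

Fixpoint boxtr (A : form) : form :=
  match A with
  | Var n => And (Var n) (Box (Var n))
  | Bot => And Bot (Box Bot)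
  | And A B => And (boxtr A) (boxtr B)
  | Or A B => Or (boxtr A) (boxtr B)
  | Imp A B => And (Imp (boxtr A) (boxtr B)) (Box (Imp (boxtr A) (boxtr B)))
  | Box A => Box (boxtr A)
  end.

From Stdlib Require Import List.
Import ListNotations.

(* Every translated formula X = A^Box is provably stable, X -> Box X, in iGL:
   atoms and implications carry their own box, and the remaining cases follow
   by induction (using axiom 4 under boxes).  Stability of the hypotheses makes
   necessitation valid under hypotheses of the form A^Box, so the translation
   of an implication introduction, (X -> Y) /\ Box (X -> Y), is derivable
   whenever X -> Y is.  With this, the translation of every axiom of LC is a
   short derivation in iGL: the LC axiom A -> Box A becomes stability itself,
   modus ponens is preserved by the first conjunct, and necessitation commutes
   with the translation. *)

Section Derivations.

Variable lc : bool.

Inductive deriv (G : list form) : form -> Prop :=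
| deriv_hyp : forall A, In A G -> deriv G A
| deriv_thm : forall A, prv lc A -> deriv G A
| deriv_mp : forall A B, deriv G (Imp A B) -> deriv G A -> deriv G B.

Lemma prv_imp_refl (A : form) : prv lc (Imp A A).
Proof.
  apply (r_MP _ _ _ (r_MP _ _ _ (ax_S lc A (Imp A A) A) (ax_K _ _ _))).
  apply ax_K.
Qed.

Lemma deriv_deduction (G : list form) (A B : form) :
  deriv (A :: G) B -> deriv G (Imp A B).
Proof.
  induction 1 as [C [<- | HC] | C HC | C D _ IHCD _ IHC].
  - apply deriv_thm, prv_imp_refl.
  - apply (deriv_mp _ C); [apply deriv_thm, ax_K | now apply deriv_hyp].
  - apply (deriv_mp _ C); [apply deriv_thm, ax_K | now apply deriv_thm].
  - apply (deriv_mp _ _ _ (deriv_mp _ _ _ (deriv_thm _ _ (ax_S _ _ _ _)) IHCD)).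
    exact IHC.
Qed.

Lemma deriv_nil (A : form) : deriv [] A -> prv lc A.
Proof.
  induction 1 as [C [] | C HC | C D _ IHCD _ IHC]; [exact HC |].
  exact (r_MP _ _ _ IHCD IHC).
Qed.

Lemma deriv_weaken (G G' : list form) (A : form) :
  incl G G' -> deriv G A -> deriv G' A.
Proof.
  intros HG. induction 1.
  - now apply deriv_hyp, HG.
  - now apply deriv_thm.
  - eapply deriv_mp; eassumption.
Qed.

Lemma deriv_thm_mp (G : list form) (A B : form) :
  prv lc (Imp A B) -> deriv G A -> deriv G B.
Proof. intros HAB. apply deriv_mp, deriv_thm, HAB. Qed.

Lemma deriv_and_intro (G : list form) (A B : form) :
  deriv G A -> deriv G B -> deriv G (And A B).
Proof. intros HA. apply deriv_mp, (deriv_thm_mp _ _ _ (ax_AndI _ _ _) HA). Qed.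

Lemma deriv_or_elim (G : list form) (A B C : form) :
  deriv G (Imp A C) -> deriv G (Imp B C) -> deriv G (Or A B) -> deriv G C.
Proof.
  intros HAC HBC. apply deriv_mp, (deriv_mp _ (Imp B C)); [| exact HBC].
  exact (deriv_thm_mp _ _ _ (ax_OrE _ _ _ _) HAC).
Qed.

Lemma deriv_box_mp (G : list form) (A B : form) :
  deriv G (Box (Imp A B)) -> deriv G (Box A) -> deriv G (Box B).
Proof. intros HAB. apply deriv_mp, (deriv_thm_mp _ _ _ (ax_Kbox _ _ _) HAB). Qed.

Lemma deriv_box_map (G : list form) (A B : form) :
  prv lc (Imp A B) -> deriv G (Box A) -> deriv G (Box B).
Proof. intros HAB. apply deriv_box_mp, deriv_thm, r_Nec, HAB. Qed.

Lemma deriv_box_and (G : list form) (A B : form) :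
  deriv G (Box A) -> deriv G (Box B) -> deriv G (Box (And A B)).
Proof. intros HA. apply deriv_box_mp, (deriv_box_map _ _ _ (ax_AndI _ _ _) HA). Qed.

Definition stable (X : form) : Prop := prv lc (Imp X (Box X)).

(* Necessitation under stable hypotheses: discharge the last hypothesis X,
   box the implication, and recover Box X from X itself. *)
Lemma deriv_box (G : list form) (C : form) :
  Forall stable G -> deriv G C -> deriv G (Box C).
Proof.
  revert C. induction G as [| X G IH]; intros C HG HC.
  - apply deriv_thm, r_Nec, deriv_nil, HC.
  - inversion HG as [| ? ? HX HGs]; subst.
    assert (HXC : deriv G (Box (Imp X C))) by (apply IH, deriv_deduction; assumption).
    apply (deriv_box_mp _ X).
    + apply (deriv_weaken G); [intros Y HY; now right | exact HXC].
    + apply (deriv_thm_mp _ X); [exact HX | now apply deriv_hyp; left].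
Qed.

End Derivations.

Arguments deriv_hyp {lc G A}.
Arguments deriv_thm {lc G A}.
Arguments deriv_mp {lc G} A {B}.
Arguments deriv_thm_mp {lc G} A {B}.
Arguments deriv_and_intro {lc G A B}.
Arguments deriv_or_elim {lc G A B C}.
Arguments deriv_box_mp {lc G} A {B}.
Arguments deriv_box_map {lc G} A {B}.
Arguments deriv_box_and {lc G A B}.
Arguments deriv_box {lc G C}.

Ltac hyp := apply deriv_hyp; simpl; auto 10.

Lemma boxtr_stable (A : form) : stable false (boxtr A).
Proof.
  unfold stable. induction A as [n | | A IHA B IHB | A IHA B IHB | A _ B _ | A _];
    apply deriv_nil, deriv_deduction; cbn [boxtr].
  - apply deriv_box_and; [| apply (deriv_thm_mp _ (ax_4 _ _))];
      apply (deriv_thm_mp _ (ax_AndE2 _ (Var n) _)); hyp.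
  - apply (deriv_thm_mp _ (ax_EFQ _ _)), (deriv_thm_mp _ (ax_AndE1 _ _ (Box Bot))).
    hyp.
  - apply deriv_box_and.
    + apply (deriv_thm_mp _ IHA), (deriv_thm_mp _ (ax_AndE1 _ _ (boxtr B))); hyp.
    + apply (deriv_thm_mp _ IHB), (deriv_thm_mp _ (ax_AndE2 _ (boxtr A) _)); hyp.
  - apply (@deriv_or_elim _ _ (boxtr A) (boxtr B)); [apply deriv_deduction.. | hyp].
    + apply (deriv_box_map _ (ax_OrI1 _ _ _)), (deriv_thm_mp _ IHA); hyp.
    + apply (deriv_box_map _ (ax_OrI2 _ _ _)), (deriv_thm_mp _ IHB); hyp.
  - apply deriv_box_and; [| apply (deriv_thm_mp _ (ax_4 _ _))];
      apply (deriv_thm_mp _ (ax_AndE2 _ (Imp (boxtr A) (boxtr B)) _)); hyp.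
  - apply (deriv_thm_mp _ (ax_4 _ _)); hyp.
Qed.

Lemma forall_stable_map_boxtr (G : list form) : Forall (stable false) (map boxtr G).
Proof.
  apply Forall_forall. intros X HX.
  apply in_map_iff in HX as [A [<- _]]. apply boxtr_stable.
Qed.

Lemma deriv_boxtr_imp_intro (G : list form) (A B : form) :
  deriv false (map boxtr (A :: G)) (boxtr B) -> deriv false (map boxtr G) (boxtr (Imp A B)).
Proof.
  intros HB. assert (HAB : deriv false (map boxtr G) (Imp (boxtr A) (boxtr B)))
    by (apply deriv_deduction, HB).
  apply deriv_and_intro; [exact HAB |].
  exact (deriv_box (forall_stable_map_boxtr G) HAB).
Qed.

Lemma deriv_boxtr_imp (G : list form) (A B : form) :
  deriv false G (boxtr (Imp A B)) -> deriv false G (Imp (boxtr A) (boxtr B)).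
Proof. apply (deriv_thm_mp _ (ax_AndE1 _ _ _)). Qed.

Lemma deriv_boxtr_imp_elim (G : list form) (A B : form) :
  deriv false G (boxtr (Imp A B)) -> deriv false G (boxtr A) -> deriv false G (boxtr B).
Proof. intros HAB. apply deriv_mp, deriv_boxtr_imp, HAB. Qed.

Lemma prv_boxtr_imp_intro (A B : form) :
  deriv false (map boxtr [A]) (boxtr B) -> iGL_prv (boxtr (Imp A B)).
Proof. intros HB. apply deriv_nil, (deriv_boxtr_imp_intro []), HB. Qed.

Ltac boxtr_intro := first [apply prv_boxtr_imp_intro | apply deriv_boxtr_imp_intro].

Theorem lemma4p22 : forall A : form, LC_prv A -> iGL_prv (boxtr A).
Proof.
  intros A HA. induction HA as [A B | A B C | A B | A B | A B | A B | A B | A B C | A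
    | A B | A | A | A _ | A B _ IHAB _ IHA | A _ IHA].
  - boxtr_intro. boxtr_intro. hyp.
  - do 3 boxtr_intro.
    apply (deriv_boxtr_imp_elim _ B); apply (deriv_boxtr_imp_elim _ A); hyp.
  - boxtr_intro. apply (deriv_thm_mp _ (ax_AndE1 _ _ (boxtr B))); hyp.
  - boxtr_intro. apply (deriv_thm_mp _ (ax_AndE2 _ (boxtr A) _)); hyp.
  - boxtr_intro. boxtr_intro. apply deriv_and_intro; hyp.
  - boxtr_intro. apply (deriv_thm_mp _ (ax_OrI1 _ _ _)); hyp.
  - boxtr_intro. apply (deriv_thm_mp _ (ax_OrI2 _ _ _)); hyp.
  - do 3 boxtr_intro. apply (@deriv_or_elim _ _ (boxtr A) (boxtr B)); [..| hyp];
      apply deriv_boxtr_imp; hyp.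
  - boxtr_intro. apply (deriv_thm_mp _ (ax_EFQ _ _)), (deriv_thm_mp _ (ax_AndE1 _ _ (Box Bot))).
    hyp.
  - boxtr_intro. boxtr_intro. apply (deriv_box_mp (boxtr A)); [| hyp].
    apply (deriv_box_map (boxtr (Imp _ _)) (ax_AndE1 _ _ _)); hyp.
  - boxtr_intro. apply (deriv_thm_mp _ (ax_4 _ _)); hyp.
  - boxtr_intro. apply (deriv_thm_mp _ (ax_Lob _ _)).
    apply (deriv_box_map (boxtr (Imp (Box A) A)) (ax_AndE1 _ _ _)); hyp.
  - boxtr_intro. apply (deriv_thm_mp _ (boxtr_stable A)); hyp.
  - exact (deriv_nil _ _ (deriv_boxtr_imp_elim _ _ _ (deriv_thm IHAB) (deriv_thm IHA))).
  - apply r_Nec, IHA.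
Qed.
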